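(* Let $n\ge1$, $d\ge0$, and let $\mathrm{Sym}_n\subset\mathbb R^{n\times n}$ be the space of symmetric matrices. Consider undirected multigraphs with a directed output pair $H=(V,E,(a,b))$, taken up to isomorphism, with $|V|\le\min\{n,2+2d\}$, $|E|\le d$, and no isolated node in $V\setminus\{a,b\}$. For each such $H$, let $P_H:\mathrm{Sym}_n\to\mathbb R^{n\times n}$ be $P_{H'}$ restricted to $\mathrm{Sym}_n$, where $H'$ is any directed multigraph obtained by orienting each edge of $H$ (this does not depend on the orientation). Then these $P_H$ form a basis of the space of $S_n$-equivariant polynomial maps $\mathrm{Sym}_n\to\mathbb R^{n\times n}$ of degree at most $d$.
   Context: For a directed multigraph with output pair $H'=(V,E,(a,b))$ ($V=[m]$, $E$ a multiset of ordered pairs in $V\times V$ allowing loops and parallel edges, $a,b\in V$ not necessarily distinct and not in $E$), $P_{H'}(X)_{i_a,i_b}=\sum_{j\in[n]^m,\ j_a=i_a,\ j_b=i_b}\prod_{(r,s)\in E}X_{j_r,j_s}$ (with multiplicity; empty product $=1$), with all off-diagonal entries $0$ when $a=b$. An undirected multigraph with directed output pair has $E$ a multiset of unordered pairs $\{r,s\}$ (loops and parallel edges allowed) and an ordered red pair $(a,b)$; isomorphism is a node bijection preserving edge multisets and the ordered red pair. A node is isolated if no edge of $E$ is incident to it. $S_n$ acts on matrices by $(g\cdot X)_{ij}=X_{g^{-1}(i),g^{-1}(j)}$ (preserving $\mathrm{Sym}_n$); $P$ is equivariant if $P(g\cdot X)=g\cdot P(X)$ for all $g\in S_n$. *)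

From HB Require Import structures.
From mathcomp Require Import all_boot all_order all_algebra all_fingroup.
From mathcomp Require Import reals.
From mathcomp Require Import mpoly.

Set Implicit Arguments.
Unset Strict Implicit.
Unset Printing Implicit Defensive.

Import Order.TTheory GRing.Theory Num.Theory.
Local Open Scope ring_scope.

(* An (edge-oriented) multigraph with output pair on nodes 'I_gm:
   edges are a multiset (seq) of ordered pairs (loops/parallel edges allowed). *)
Record graph := Graph {
  gm : nat;
  gE : seq ('I_gm * 'I_gm);
  ga : 'I_gm;
  gb : 'I_gm }.

Definition und_eq (m : nat) (r s : 'I_m) (e : 'I_m * 'I_m) : bool :=
  ((e.1 == r) && (e.2 == s)) || ((e.1 == s) && (e.2 == r)).

Definition isolated (H : graph) (v : 'I_(gm H)) : bool :=
  ~~ has (fun e : 'I_(gm H) * 'I_(gm H) => (e.1 == v) || (e.2 == v)) (gE H).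

Definition admissible (n d : nat) (H : graph) : Prop :=
  [/\ (gm H <= minn n (2 + 2 * d))%N,
      (size (gE H) <= d)%N &
      forall v : 'I_(gm H), v != ga H -> v != gb H -> ~~ isolated v].

Definition giso (H1 H2 : graph) : Prop :=
  exists sigma : 'I_(gm H1) -> 'I_(gm H2),
    [/\ bijective sigma, sigma (ga H1) = ga H2, sigma (gb H1) = gb H2 &
        forall r s : 'I_(gm H1),
          count (und_eq r s) (gE H1) = count (und_eq (sigma r) (sigma s)) (gE H2)].

(* P_{H'}(X), H' the directed multigraph given by the oriented edges of H *)
Definition Pmap (R : nzRingType) (n : nat) (H : graph) (X : 'M[R]_n) : 'M[R]_n :=
  \matrix_(i, k)
    (if (ga H == gb H) && (i != k) then 0
     else \sum_(phi : {ffun 'I_(gm H) -> 'I_n} | (phi (ga H) == i) && (phi (gb H) == k))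
            \prod_(e <- gE H) X (phi e.1) (phi e.2)).

Definition symmat (R : nzRingType) (n : nat) (X : 'M[R]_n) : Prop := X^T = X.

Definition pact (R : nzRingType) (n : nat) (g : 'S_n) (X : 'M[R]_n) : 'M[R]_n :=
  \matrix_(i, j) X ((g^-1)%g i) ((g^-1)%g j).

(* f : Sym_n -> R^{n x n} (only values on symmat matrices matter) is S_n-equivariant *)
Definition equivariant (R : nzRingType) (n : nat) (f : 'M[R]_n -> 'M[R]_n) : Prop :=
  forall (g : 'S_n) (X : 'M[R]_n), symmat X -> f (pact g X) = pact g (f X).

(* f is, on Sym_n, a polynomial map of degree at most d: every entry is the
   restriction to Sym_n of a polynomial of total degree <= d in the n*n entries. *)
Definition polymap_le (R : comNzRingType) (n d : nat) (f : 'M[R]_n -> 'M[R]_n) : Prop :=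
  forall i j : 'I_n, exists p : mpoly.mpoly (n * n) R,
    (msize p <= d.+1)%N /\
    forall X : 'M[R]_n, symmat X ->
      f X i j = mpoly.meval (fun t : 'I_(n * n) => mxvec X 0 t) p.

From mathcomp Require Import all_boot all_order all_algebra all_fingroup.
From mathcomp Require Import reals.
From mathcomp Require Import mpoly zify.

(* Write P_H as a homomorphism sum: entry (i, k) sums, over all maps phi from
   the nodes of H to [n] with phi a = i and phi b = k, the product of the
   entries X (phi r) (phi s) over the edges (r, s).
   1. Equivariance is a reindexing of that sum by g; polynomiality of degree
      |E| is read off the sum; orientation independence holds on symmetric X.
   2. Independence: evaluate a vanishing combination at test matrices
      X(t)_{pq} = t^((d+1)^code{p,q}) with code injective on unordered pairs;
      the (d+1)-adic digits of the exponents record edge multiplicities, so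
      the coefficient attached to a graph H0 with the most nodes only receives
      contributions from graphs isomorphic to H0.
   3. Spanning: by the Reynolds average, an equivariant map is a combination
      of injective sums (phi injective) of monomial multigraphs; grouping
      homomorphisms by their kernel expresses homomorphism sums through
      injective sums of quotient graphs, which inverts by induction on the
      number of nodes; removing isolated nodes turns a homomorphism sum with
      at most n nodes and d edges into a multiple of an admissible P_H. *)

Set Implicit Arguments.
Unset Strict Implicit.
Unset Printing Implicit Defensive.
Import Order.TTheory GRing.Theory Num.Theory.
Local Open Scope ring_scope.

Section HomomorphismSums.
Variables (R : comNzRingType) (n : nat).

Definition homV (V : finType) (E : seq (V * V)) (a b : V) (X : 'M[R]_n) : 'M[R]_n :=
  \matrix_(i, k) \sum_(phi : {ffun V -> 'I_n} | (phi a == i) && (phi b == k))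
      \prod_(e <- E) X (phi e.1) (phi e.2).

Definition injV (V : finType) (E : seq (V * V)) (a b : V) (X : 'M[R]_n) : 'M[R]_n :=
  \matrix_(i, k) \sum_(phi : {ffun V -> 'I_n} | [&& injectiveb phi, phi a == i & phi b == k])
      \prod_(e <- E) X (phi e.1) (phi e.2).

(* When a = b the off-diagonal entries of P_H vanish anyway, so P_H = homV. *)
Lemma Pmap_homV (H : graph) (X : 'M[R]_n) : Pmap H X = homV (gE H) (ga H) (gb H) X.
Proof.
apply/matrixP => i k; rewrite !mxE.
case: ifP => [/andP[/eqP eab ik]|//].
rewrite big_pred0 // => phi; rewrite eab.
by apply: contraNF ik => /andP[/eqP <- /eqP <-].
Qed.

Definition emap (V W : finType) (s : V -> W) (E : seq (V * V)) : seq (W * W) :=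
  map (fun e => (s e.1, s e.2)) E.

Section Relabel.
Variables (V W : finType) (s : V -> W) (t : W -> V).
Hypotheses (st : cancel s t) (ts : cancel t s).

Let pullback (psi : {ffun W -> 'I_n}) : {ffun V -> 'I_n} := [ffun v => psi (s v)].

Let pullback_bij : bijective pullback.
Proof.
by exists (fun phi : {ffun V -> 'I_n} => [ffun w => phi (t w)] : {ffun W -> 'I_n}) => f; apply/ffunP => x; rewrite !ffunE ?st ?ts.
Qed.

Let injectiveb_pullback psi : injectiveb (pullback psi) = injectiveb psi.
Proof.
apply/injectiveP/injectiveP => h x y.
- by move=> e; rewrite -(ts x) -(ts y); congr s; apply: h; rewrite !ffunE !ts.
- by rewrite !ffunE => /h; exact: (can_inj st).
Qed.

Lemma homV_relabel E a b X : homV E a b X = homV (emap s E) (s a) (s b) X.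
Proof.
apply/matrixP => i k; rewrite !mxE (reindex pullback); last exact: onW_bij _ pullback_bij.
apply: eq_big => [psi|psi _]; first by rewrite !ffunE.
by rewrite big_map; apply: eq_bigr => e _; rewrite !ffunE.
Qed.

Lemma injV_relabel E a b X : injV E a b X = injV (emap s E) (s a) (s b) X.
Proof.
apply/matrixP => i k; rewrite !mxE (reindex pullback); last exact: onW_bij _ pullback_bij.
apply: eq_big => [psi|psi _]; first by rewrite injectiveb_pullback !ffunE.
by rewrite big_map; apply: eq_bigr => e _; rewrite !ffunE.
Qed.
End Relabel.

(* Equivariance: reindex the sum by composing phi with g^-1. *)
Lemma homV_equiv (V : finType) (E : seq (V * V)) a b (g : 'S_n) (X : 'M[R]_n) :
  homV E a b (pact g X) = pact g (homV E a b X).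
Proof.
apply/matrixP => i k; rewrite !mxE.
pose h (phi : {ffun V -> 'I_n}) : {ffun V -> 'I_n} := [ffun v => (g^-1)%g (phi v)].
pose h' (phi : {ffun V -> 'I_n}) : {ffun V -> 'I_n} := [ffun v => g (phi v)].
have hK : cancel h h' by move=> f; apply/ffunP => v; rewrite !ffunE permKV.
have h'K : cancel h' h by move=> f; apply/ffunP => v; rewrite !ffunE permK.
rewrite [RHS](reindex h); last by apply: onW_bij; exists h'.
apply: eq_big => [phi|phi _]; first by rewrite !ffunE !(inj_eq (@perm_inj _ _)).
by apply: eq_bigr => e _; rewrite !mxE !ffunE.
Qed.

(* Each entry of homV is the polynomial sum of the monomials
   prod_{e in E} x_{phi e.1, phi e.2}, of degree |E|. *)
Lemma homV_poly (d : nat) (V : finType) (E : seq (V * V)) a b :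
  (size E <= d)%N -> forall i j : 'I_n, exists p : mpoly.mpoly (n * n) R,
    (msize p <= d.+1)%N /\
    forall X : 'M[R]_n, homV E a b X i j = mpoly.meval (fun t : 'I_(n * n) => mxvec X 0 t) p.
Proof.
move=> hE i j.
pose mon (phi : {ffun V -> 'I_n}) : 'X_{1.. n * n} :=
  (\sum_(e <- E) U_(mxvec_index (phi e.1) (phi e.2)))%MM.
exists (\sum_(phi : {ffun V -> 'I_n} | (phi a == i) && (phi b == j)) 'X_[mon phi]).
split.
  apply: leq_trans (msize_sum _ _ _) _.
  apply/bigmax_leqP => phi _; rewrite msizeX ltnS /mon mdeg_sum.
  by rewrite (eq_bigr (fun _ => 1%N)) ?sum1_size // => e _; rewrite mdeg1.
move=> X; rewrite mxE rmorph_sum; apply: eq_bigr => phi _.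
rewrite /mon -(big_map (fun e => U_(mxvec_index (phi e.1) (phi e.2)))%MM xpredT idfun).
rewrite -mpolyX_prod rmorph_prod big_map; apply: eq_bigr => e _.
by rewrite /= mevalXU mxvecE.
Qed.

Lemma Pmap_equiv (H : graph) : equivariant (@Pmap R n H).
Proof. by move=> g X _; rewrite !Pmap_homV homV_equiv. Qed.

Lemma Pmap_poly (d : nat) (H : graph) :
  (size (gE H) <= d)%N -> polymap_le d (@Pmap R n H).
Proof.
move=> hE i j; have [p [hp hX]] := homV_poly (ga H) (gb H) hE i j.
by exists p; split => // X _; rewrite Pmap_homV hX.
Qed.

End HomomorphismSums.

(* Orientation independence: on a symmetric X the factor X (phi r) (phi s) of
   an edge does not depend on its direction, so we may replace every edge by
   its normal form [nrm e] (smaller endpoint first); two edge lists with the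
   same undirected multiplicities have permuted normal-form lists. *)
Section Orientation.
Variables (R : comNzRingType) (n m : nat).

Definition nrm (e : 'I_m * 'I_m) : 'I_m * 'I_m :=
  if (e.1 <= e.2)%N then e else (e.2, e.1).

Lemma nrm_eq (e x : 'I_m * 'I_m) :
  (nrm e == x) = ((x.1 <= x.2)%N && und_eq x.1 x.2 e).
Proof.
case: e x => p q [r s]; rewrite /nrm /und_eq /=.
have valE (u v : 'I_m) : (u == v) = (nat_of_ord u == nat_of_ord v) by [].
rewrite ?xpair_eqE ?valE.
case: (leqP p q) => hpq /=; rewrite ?xpair_eqE /= ?valE;
 case: (leqP r s) => hrs /=;
 case: (nat_of_ord p =P nat_of_ord r) => epr;
 case: (nat_of_ord q =P nat_of_ord s) => eqs;
 case: (nat_of_ord p =P nat_of_ord s) => eps;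
 case: (nat_of_ord q =P nat_of_ord r) => eqr //=; lia.
Qed.

Lemma count_nrm (E : seq ('I_m * 'I_m)) x :
  count_mem x (map nrm E) = if (x.1 <= x.2)%N then count (und_eq x.1 x.2) E else 0%N.
Proof.
rewrite count_map; under eq_count => e do rewrite /= nrm_eq.
by case: ifP => _ //; exact: count_pred0.
Qed.

Lemma perm_nrm (E1 E2 : seq ('I_m * 'I_m)) :
  (forall r s : 'I_m, count (und_eq r s) E1 = count (und_eq r s) E2) ->
  perm_eq (map nrm E1) (map nrm E2).
Proof. by move=> h; apply/allP => x _; apply/eqP; rewrite !count_nrm h. Qed.

Lemma prod_nrm (E : seq ('I_m * 'I_m)) (X : 'M[R]_n) (phi : 'I_m -> 'I_n) :
  symmat X ->
  \prod_(e <- E) X (phi e.1) (phi e.2) = \prod_(e <- map nrm E) X (phi e.1) (phi e.2).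
Proof.
move=> sX; rewrite big_map; apply: eq_bigr => -[p q] _; rewrite /nrm /=.
by case: ifP => // _; rewrite -{1}sX mxE.
Qed.

Lemma Pmap_orient (E1 E2 : seq ('I_m * 'I_m)) (a b : 'I_m) :
  (forall r s : 'I_m, count (und_eq r s) E1 = count (und_eq r s) E2) ->
  forall X : 'M[R]_n, symmat X ->
    Pmap (Graph E1 a b) X = Pmap (Graph E2 a b) X.
Proof.
move=> h X sX; rewrite !Pmap_homV; apply/matrixP => i k; rewrite !mxE.
apply: eq_bigr => phi _; rewrite (prod_nrm E1 phi sX) (prod_nrm E2 phi sX).
exact: perm_big (perm_nrm h).
Qed.

End Orientation.

(* Fix an admissible H0 with the largest number of
   nodes among those with a nonzero coefficient, embed its nodes into [n] by
   iota, and evaluate everything at the symmetric test matrix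
   X(t)_{pq} = t ^ (B ^ code{p,q}), where code is an injective numbering of
   unordered pairs and B = d + 1 exceeds every edge count.  The entry of
   P_H(X(t)) at the image of the output pair of H0 is a polynomial in t whose
   monomials t^N record, in base B, the multiplicities of the edges of the
   image of H under phi.  The coefficient of the monomial coming from H0 is
   nonzero for H0, and any other H contributing to it is isomorphic to H0. *)

Section BaseDigits.
Local Open Scope nat_scope.

Lemma digit_sum (B c : nat) (s : seq nat) : size s < B ->
  ((\sum_(x <- s) B ^ x) %/ B ^ c) %% B = count_mem c s.
Proof.
move=> hs; have B0 : 0 < B by case: B hs.
have [hB|hB] := leqP B 1.
  by case: s hs => [|x s] /=; [rewrite big_nil div0n mod0n | lia].
rewrite (bigID (fun x => x < c)) /=.
set L := \sum_(x <- s | x < c) B ^ x.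
have hL : L < B ^ c.
  case: c @L => [|c] L; first by rewrite /L big_pred0 //= expn0.
  apply: (@leq_ltn_trans (\sum_(x <- s | x < c.+1) B ^ c)).
    by apply: leq_sum => x /= hx; rewrite leq_exp2l.
  rewrite -[X in \sum_(_ <- _ | _) X]mul1n -big_distrl sum1_count /= expnS.
  rewrite ltn_mul2r expn_gt0 B0 /=.
  exact: leq_ltn_trans (count_size _ _) hs.
have hH : \sum_(x <- s | ~~ (x < c)) B ^ x =
          B ^ c * (count_mem c s + B * \sum_(x <- s | c < x) B ^ (x - c).-1).
  rewrite big_distrr mulnDr /= (bigID (fun x => x == c)) /=; congr (_ + _).
    rewrite -sum1_count big_distrr /= (eq_bigl (fun x => x == c)); last first.
      by move=> x; case: eqP => [->|]; rewrite ?ltnn ?andbF ?andbT.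
    by apply: eq_bigr => x /eqP ->; rewrite muln1.
  rewrite (eq_bigl (fun x => c < x)); last first.
    by move=> x; rewrite -leqNgt ltn_neqAle eq_sym andbC.
  rewrite big_distrr /=; apply: eq_bigr => x hx.
  by rewrite -expnS prednK ?subn_gt0 // -expnD subnKC // ltnW.
rewrite hH addnC mulnC divnMDl ?expn_gt0 ?B0 // divn_small // addn0.
rewrite addnC mulnC modnMDl modn_small //.
exact: leq_ltn_trans (count_size _ _) hs.
Qed.

End BaseDigits.

Section PairCode.
Variable n : nat.

Definition code (p q : 'I_n) : nat := (minn p q * n + maxn p q)%N.

Lemma codeC (p q : 'I_n) : code p q = code q p.
Proof. by rewrite /code minnC maxnC. Qed.

Lemma code_eq (p q p' q' : 'I_n) :
  (code p q == code p' q') = ((p == p') && (q == q')) || ((p == q') && (q == p')).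
Proof.
apply/eqP/idP => [h|]; last first.
  by case/orP => /andP[/eqP -> /eqP ->]; rewrite // codeC.
have n0 : (0 < n)%N := leq_ltn_trans (leq0n p) (ltn_ord p).
have hmax (u v : 'I_n) : (maxn u v < n)%N by rewrite gtn_max !ltn_ord.
have hdiv := congr1 (fun x => x %/ n)%N h; have hmod := congr1 (fun x => x %% n)%N h.
rewrite /code /= !divnMDl ?divn_small ?modnMDl ?modn_small //= ?addn0 in hdiv hmod.
have valE (u v : 'I_n) : (u == v) = (nat_of_ord u == nat_of_ord v) by [].
rewrite !valE; apply/orP.
case: (nat_of_ord p =P nat_of_ord p') => e1; case: (nat_of_ord q =P nat_of_ord q') => e2;
case: (nat_of_ord p =P nat_of_ord q') => e3; case: (nat_of_ord q =P nat_of_ord p') => e4;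
rewrite /= ?andbT ?andbF; lia.
Qed.

Lemma und_eq_code (m : nat) (psi : 'I_m -> 'I_n) (r s : 'I_m) (e : 'I_m * 'I_m) :
  injective psi ->
  und_eq r s e = (code (psi e.1) (psi e.2) == code (psi r) (psi s)).
Proof. by move=> ipsi; rewrite code_eq !(inj_eq ipsi). Qed.

Definition cnt (m : nat) (psi : 'I_m -> 'I_n) (E : seq ('I_m * 'I_m)) (c : nat) : nat :=
  count (fun e => code (psi e.1) (psi e.2) == c) E.

Lemma image_cover (Hs H : graph) (iota : 'I_(gm Hs) -> 'I_n) (phi : 'I_(gm H) -> 'I_n) :
  (forall v, v != ga Hs -> v != gb Hs -> ~~ isolated v) ->
  phi (ga H) = iota (ga Hs) -> phi (gb H) = iota (gb Hs) ->
  (forall c, cnt phi (gE H) c = cnt iota (gE Hs) c) ->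
  forall w, exists v, phi v = iota w.
Proof.
move=> hiso ha hb hc w.
have [->|naw] := eqVneq w (ga Hs); first by exists (ga H).
have [->|nbw] := eqVneq w (gb Hs); first by exists (gb H).
have := hiso w naw nbw; rewrite /isolated negbK => /hasP [es hes hw].
have : (0 < cnt iota (gE Hs) (code (iota es.1) (iota es.2)))%N.
  by rewrite -has_count; apply/hasP; exists es.
rewrite -hc -has_count => /hasP [e he]; rewrite code_eq.
case/orP: hw => /eqP <- /orP [] /andP [/eqP h1 /eqP h2];
  by [exists e.1 | exists e.2].
Qed.

End PairCode.

Lemma cover_factor (T : finType) (m m' : nat) (iota : 'I_m' -> T) (phi : 'I_m -> T) :
  injective iota -> (m <= m')%N -> (forall w, exists v, phi v = iota w) ->
  exists2 sigma : 'I_m -> 'I_m', bijective sigma & forall v, iota (sigma v) = phi v.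
Proof.
move=> iinj hm cover.
set A := [set phi v | v in 'I_m]; set B := [set iota w | w in 'I_m'].
have BA : B \subset A.
  apply/subsetP => x /imsetP [w _ ->]; have [v <-] := cover w.
  by apply/imsetP; exists v.
have cB : #|B| = m' by rewrite card_imset // card_ord.
have cA : (#|A| <= m)%N by rewrite -[X in (_ <= X)%N]card_ord leq_imset_card.
have cAB := subset_leq_card BA.
have eqm : m = m' by apply/eqP; rewrite eqn_leq hm /= -cB; apply: leq_trans cAB cA.
have phi_inj : injective phi.
  have : #|A| == #|'I_m| by rewrite card_ord eqn_leq cA /= eqm -cB.
  by move/imset_injP => h x y; exact: h.
have inB v : phi v \in codom iota.
  have : phi v \in B by rewrite (_ : B = A) ?imset_f //; apply/eqP; rewrite eqEcard BA cB -eqm.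
  by case/imsetP => w _ ->; exact: codom_f.
pose sigma v := iinv (inB v).
have sigmaE v : iota (sigma v) = phi v := f_iinv (inB v).
exists sigma => //.
apply: inj_card_bij; last by rewrite !card_ord eqm.
by move=> x y exy; apply: phi_inj; rewrite -!sigmaE exy.
Qed.

Lemma iso_from_count (n : nat) (Hs H : graph) (iota : 'I_(gm Hs) -> 'I_n)
    (phi : 'I_(gm H) -> 'I_n) :
  injective iota -> (gm H <= gm Hs)%N ->
  (forall v, v != ga Hs -> v != gb Hs -> ~~ isolated v) ->
  phi (ga H) = iota (ga Hs) -> phi (gb H) = iota (gb Hs) ->
  (forall c, cnt phi (gE H) c = cnt iota (gE Hs) c) -> giso H Hs.
Proof.
move=> iinj hm hiso ha hb hc.
have [sigma sigma_bij sigmaE] := cover_factor iinj hm (image_cover hiso ha hb hc).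
have phi_inj : injective phi.
  by move=> x y; rewrite -!sigmaE => /iinj; exact: (bij_inj sigma_bij).
exists sigma; split => //; first by apply: iinj; rewrite sigmaE ha.
  by apply: iinj; rewrite sigmaE hb.
move=> r s; rewrite (eq_count (fun e => und_eq_code r s e phi_inj)).
rewrite (eq_count (fun e => und_eq_code (sigma r) (sigma s) e iinj)) !sigmaE.
exact: hc.
Qed.

(* A polynomial over a numeric domain vanishing at every point is zero: it has
   more roots 0, 1, ..., size p - 1 than its size allows. *)
Lemma poly_eval_eq0 (R : numDomainType) (p : {poly R}) : (forall t, p.[t] = 0) -> p = 0.
Proof.
move=> h; apply/eqP; apply: contraT => p_neq0.
have hr : all (root p) [seq i%:R | i <- iota 0 (size p)].
  by apply/allP => x /mapP [i _ ->]; rewrite /root h.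
have hu : uniq [seq i%:R : R | i <- iota 0 (size p)].
  by rewrite map_inj_uniq ?iota_uniq // => i j /eqP; rewrite eqr_nat => /eqP.
by have := max_poly_roots p_neq0 hr hu; rewrite size_map size_iota ltnn.
Qed.

Section TestMatrix.
Variables (R : numDomainType) (n d : nat) (Hs : graph).
Hypothesis Hs_le_n : (gm Hs <= n)%N.

Definition embed (v : 'I_(gm Hs)) : 'I_n := widen_ord Hs_le_n v.

Lemma embed_inj : injective embed.
Proof. by move=> x y /(congr1 val) /= /val_inj. Qed.

Definition testmx (t : R) : 'M[R]_n := \matrix_(p, q) t ^+ (d.+1 ^ code p q).

Lemma testmx_sym t : symmat (testmx t).
Proof. by apply/matrixP => p q; rewrite !mxE codeC. Qed.

(* Base-(d+1) encoding of the image edge multiset of E under phi. *)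
Definition weight (m : nat) (E : seq ('I_m * 'I_m)) (phi : 'I_m -> 'I_n) : nat :=
  (\sum_(e <- E) d.+1 ^ code (phi e.1) (phi e.2))%N.

Definition testpoly (H : graph) : {poly R} :=
  \sum_(phi : {ffun 'I_(gm H) -> 'I_n} |
          (phi (ga H) == embed (ga Hs)) && (phi (gb H) == embed (gb Hs)))
    'X^(weight (gE H) phi).

Lemma Pmap_testmx (H : graph) t :
  Pmap H (testmx t) (embed (ga Hs)) (embed (gb Hs)) = (testpoly H).[t].
Proof.
rewrite Pmap_homV mxE horner_sum; apply: eq_bigr => phi _.
by rewrite hornerXn -prodrXr; apply: eq_bigr => e _; rewrite mxE.
Qed.

Lemma coef_testpoly (H : graph) N :
  (testpoly H)`_N =
  (\sum_(phi : {ffun 'I_(gm H) -> 'I_n} |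
          (phi (ga H) == embed (ga Hs)) && (phi (gb H) == embed (gb Hs)))
     (weight (gE H) phi == N))%:R.
Proof. by rewrite coef_sum natr_sum; apply: eq_bigr => phi _; rewrite coefXn eq_sym. Qed.

Lemma cnt_weight (m : nat) (E : seq ('I_m * 'I_m)) (phi : 'I_m -> 'I_n) c :
  (size E <= d)%N -> cnt phi E c = ((weight E phi %/ d.+1 ^ c) %% d.+1)%N.
Proof.
move=> hE; rewrite /weight -(big_map (fun e => code (phi e.1) (phi e.2)) xpredT).
by rewrite digit_sum ?size_map ?ltnS // count_map.
Qed.

Definition weight0 : nat := weight (gE Hs) embed.

Lemma testpoly_iso (H : graph) :
  (size (gE H) <= d)%N -> (size (gE Hs) <= d)%N -> (gm H <= gm Hs)%N ->
  (forall v, v != ga Hs -> v != gb Hs -> ~~ isolated v) ->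
  (testpoly H)`_weight0 != 0 -> giso H Hs.
Proof.
move=> hE hEs hm hiso; rewrite coef_testpoly pnatr_eq0 sum_nat_eq0 negb_forall.
case/existsP => phi; rewrite negb_imply => /andP [/andP [/eqP ha /eqP hb]].
rewrite eqb0 negbK => /eqP hw.
apply: (iso_from_count embed_inj hm hiso ha hb) => c.
by rewrite !cnt_weight // hw.
Qed.

Lemma testpoly_self : (testpoly Hs)`_weight0 != 0.
Proof.
rewrite coef_testpoly pnatr_eq0 sum_nat_eq0 negb_forall; apply/existsP.
exists [ffun v => embed v]; rewrite !ffunE !eqxx /= eqb0 negbK.
by apply/eqP; apply: eq_bigr => e _; rewrite !ffunE.
Qed.

End TestMatrix.

Lemma Pmap_indep (R : numDomainType) (n d k : nat) (G : 'I_k -> graph) (c : 'I_k -> R) :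
  (forall i, admissible n d (G i)) ->
  (forall i j, i != j -> ~ giso (G i) (G j)) ->
  (forall X : 'M[R]_n, symmat X -> \sum_(i < k) c i *: Pmap (G i) X = 0) ->
  forall i, c i = 0.
Proof.
move=> adm niso hsum i0; apply/eqP; apply: contraT => ci0.
case: (@arg_maxnP _ i0 (fun i => c i != 0) (fun i => gm (G i)) ci0) => i1 ci1 max_i1.
have [hm1 hE1 hiso1] := adm i1.
have hm1n : (gm (G i1) <= n)%N := leq_trans hm1 (geq_minl _ _).
pose Q j := testpoly R d hm1n (G j).
have Q0 : \sum_(j < k) c j *: Q j = 0.
  apply: poly_eval_eq0 => t; rewrite horner_sum.
  have := congr1 (fun M : 'M[R]_n => M (embed hm1n (ga (G i1))) (embed hm1n (gb (G i1))))
    (hsum _ (@testmx_sym R n d t)).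
  rewrite /= summxE [X in _ = X]mxE => sum0; rewrite -[RHS]sum0; apply: eq_bigr => j _.
  by rewrite hornerZ mxE Pmap_testmx.
have := congr1 (fun p : {poly R} => p`_(weight0 d hm1n)) Q0.
rewrite coef_sum coef0 (bigD1 i1) //= big1 ?addr0 => [/eqP|j nj]; last first.
  rewrite coefZ; have [->|cj] := eqVneq (c j) 0; first by rewrite mul0r.
  have [_ hEj _] := adm j.
  have [->|cQj] := eqVneq (Q j)`_(weight0 d hm1n) 0; first by rewrite mulr0.
  by case: (niso j i1 nj); apply: (testpoly_iso hEj hE1 (max_i1 j cj) hiso1 cQj).
by rewrite coefZ mulf_eq0 (negbTE ci1) (negbTE (testpoly_self R d hm1n)).
Qed.

Section SpanClosure.
Variables (R : comNzRingType) (n d : nat).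

Definition inspan (F : 'M[R]_n -> 'M[R]_n) : Prop :=
  exists (k : nat) (G : 'I_k -> graph) (c : 'I_k -> R),
    (forall i, admissible n d (G i)) /\
    forall X : 'M[R]_n, symmat X -> F X = \sum_(i < k) c i *: Pmap (G i) X.

Lemma span_ext F F' : (forall X, symmat X -> F X = F' X) -> inspan F -> inspan F'.
Proof.
by move=> h [k [G [c [hG hF]]]]; exists k, G, c; split => // X sX; rewrite -h ?hF.
Qed.

Lemma span0 : inspan (fun _ => 0).
Proof.
exists 0%N, (fun _ => @Graph 1 [::] ord0 ord0), (fun _ => 0).
by split => [[]|X _]; rewrite ?big_ord0.
Qed.

Lemma span_graph H : admissible n d H -> inspan (@Pmap R n H).
Proof.
move=> hH; exists 1%N, (fun _ => H), (fun _ => 1); split => // X _.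
by rewrite big_ord1 scale1r.
Qed.

Lemma spanZ F (a : R) : inspan F -> inspan (fun X => a *: F X).
Proof.
move=> [k [G [c [hG hF]]]]; exists k, G, (fun i => a * c i); split => // X sX.
by rewrite hF // scaler_sumr; apply: eq_bigr => i _; rewrite scalerA.
Qed.

Lemma spanD F F' : inspan F -> inspan F' -> inspan (fun X => F X + F' X).
Proof.
move=> [k [G [c [hG hF]]]] [k' [G' [c' [hG' hF']]]].
exists (k + k')%N, (fun i => match split i with inl j => G j | inr j => G' j end).
exists (fun i => match split i with inl j => c j | inr j => c' j end).
split => [i|X sX]; first by case: (split i).
rewrite big_split_ord /= hF // hF' //.
congr (_ + _); apply: eq_bigr => i _.
  by have := unsplitK (inl i : 'I_k + 'I_k'); rewrite /= => ->.
by have := unsplitK (inr i : 'I_k + 'I_k'); rewrite /= => ->.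
Qed.

Lemma spanB F F' : inspan F -> inspan F' -> inspan (fun X => F X - F' X).
Proof.
move=> h h'; apply: spanD h _; apply: span_ext (spanZ (-1) h') => X _.
by rewrite scaleN1r.
Qed.

Lemma span_sum (I : Type) (r : seq I) (P : pred I) (F : I -> 'M[R]_n -> 'M[R]_n) :
  (forall i, P i -> inspan (F i)) -> inspan (fun X => \sum_(i <- r | P i) F i X).
Proof.
move=> h; elim: r => [|i r ih]; first by apply: span_ext span0 => X _; rewrite big_nil.
case hi: (P i); last by apply: span_ext ih => X _; rewrite big_cons hi.
by apply: span_ext (spanD (h i hi) ih) => X _; rewrite big_cons hi.
Qed.

End SpanClosure.

(* A node of V is active if it is an output node or
   lies on an edge; the inactive nodes contribute a free factor n^#inactive to
   homV, and the active part is an admissible graph when |V| <= n and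
   |E| <= d (it has at most 2 + 2|E| nodes). *)
Section ActivePart.
Variables (R : comNzRingType) (n : nat) (V : finType) (E : seq (V * V)) (a b : V).

Definition active (v : V) : bool :=
  [|| v == a, v == b | has (fun e : V * V => (e.1 == v) || (e.2 == v)) E].
Definition Act := {v : V | active v}.
Definition Idle := {v : V | ~~ active v}.

Lemma active_a : active a. Proof. by rewrite /active eqxx. Qed.
Lemma active_b : active b. Proof. by rewrite /active eqxx orbT. Qed.

Definition act_a : Act := exist _ a active_a.
Definition act_b : Act := exist _ b active_b.
Definition to_act (v : V) : Act := insubd act_a v.
Definition Eact : seq (Act * Act) := emap to_act E.

Lemma active_edge e : e \in E -> active e.1 && active e.2.
Proof.
by move=> he; rewrite /active; apply/andP; split; apply/or3P; constructor 3;
  apply/hasP; exists e; rewrite ?eqxx ?orbT.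
Qed.

Lemma to_actK v : active v -> val (to_act v) = v.
Proof. by move=> av; rewrite /to_act insubdK. Qed.

Definition glue (p : {ffun Act -> 'I_n} * {ffun Idle -> 'I_n}) : {ffun V -> 'I_n} :=
  [ffun v => if (insub v : option Act) is Some w then p.1 w
             else if (insub v : option Idle) is Some u then p.2 u else p.1 act_a].

Lemma glue_bij : bijective glue.
Proof.
exists (fun phi : {ffun V -> 'I_n} =>
  ([ffun w : Act => phi (val w)], [ffun u : Idle => phi (val u)])
  : {ffun Act -> 'I_n} * {ffun Idle -> 'I_n}).
  move=> [p1 p2]; congr (_, _); apply/ffunP => w; rewrite !ffunE ?valK //.
  by rewrite insubF ?valK //; apply/negbTE; exact: (valP w).
move=> phi; apply/ffunP => v; rewrite !ffunE.
case: insubP => [w _ <-|av]; first by rewrite ffunE.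
by case: insubP => [u _ <-|]; [rewrite ffunE | rewrite av].
Qed.

Lemma glue_active p v : active v -> glue p v = p.1 (to_act v).
Proof. by move=> av; rewrite ffunE /to_act /insubd (insubT _ av). Qed.

Lemma homV_active (X : 'M[R]_n) :
  homV E a b X = (#|{: {ffun Idle -> 'I_n}}|)%:R *: homV Eact act_a act_b X.
Proof.
apply/matrixP => i k; rewrite !mxE (reindex glue); last exact: onW_bij glue_bij.
rewrite (eq_bigr (fun p : {ffun Act -> 'I_n} * {ffun Idle -> 'I_n} => \prod_(e <- Eact) X (p.1 e.1) (p.1 e.2))); last first.
  move=> p _; rewrite big_map big_seq [RHS]big_seq; apply: eq_bigr => e he.
  by have /andP [h1 h2] := active_edge he; rewrite !glue_active.
rewrite (eq_bigl (fun p : {ffun Act -> 'I_n} * {ffun Idle -> 'I_n} =>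
  ((p.1 act_a == i) && (p.1 act_b == k)) && true)); last first.
  move=> p; rewrite !glue_active ?active_a ?active_b ?andbT //.
  by rewrite /to_act /insubd (insubT _ active_a) (insubT _ active_b).
rewrite -(pair_big (fun p1 : {ffun Act -> 'I_n} => (p1 act_a == i) && (p1 act_b == k)) xpredT
   (fun p1 _ => \prod_(e <- Eact) X (p1 e.1) (p1 e.2))) /=.
by rewrite mulr_sumr; apply: eq_bigr => p1 _; rewrite sumr_const mulr_natl.
Qed.

Definition Gact : graph :=
  @Graph #|{: Act}| (emap enum_rank Eact) (enum_rank act_a) (enum_rank act_b).

Lemma homV_Gact (X : 'M[R]_n) : homV Eact act_a act_b X = Pmap Gact X.
Proof. by rewrite Pmap_homV; exact: (homV_relabel (@enum_rankK _) (@enum_valK _)). Qed.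

Lemma card_Act : (#|{: Act}| <= 2 + 2 * size E)%N.
Proof.
pose s := a :: b :: (map fst E ++ map snd E).
apply: (@leq_trans (size s)); last by rewrite /s /= size_cat !size_map; lia.
apply: leq_trans (card_size s); rewrite card_sig; apply: subset_leq_card.
apply/subsetP => v; rewrite !inE /active.
case/or3P => [/eqP ->|/eqP ->|/hasP [e he /orP [] /eqP <-]]; rewrite ?eqxx ?orbT //;
  by rewrite mem_cat ?(map_f fst he) ?(map_f snd he) !orbT.
Qed.

Lemma Gact_no_isolated (v : 'I_(gm Gact)) :
  v != ga Gact -> v != gb Gact -> ~~ isolated v.
Proof.
move=> hva hvb; rewrite /isolated negbK.
set w := enum_val v; have hw : enum_rank w = v by rewrite /w enum_valK.
have wa : val w != a.
  by apply: contraNneq hva => e; rewrite -hw; apply/eqP; congr enum_rank; exact: val_inj.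
have wb : val w != b.
  by apply: contraNneq hvb => e; rewrite -hw; apply/eqP; congr enum_rank; exact: val_inj.
have := valP w; rewrite /active (negbTE wa) (negbTE wb) /= => /hasP [e he hew].
have /andP [h1 h2] := active_edge he.
apply/hasP; exists (enum_rank (to_act e.1), enum_rank (to_act e.2)).
  by rewrite /Eact /emap -map_comp; apply/mapP; exists e.
by case/orP: hew => /eqP ew; apply/orP; [left|right]; rewrite /= -hw; apply/eqP;
  congr enum_rank; apply: val_inj; rewrite /= to_actK.
Qed.

Lemma admissible_Gact (d : nat) :
  (#|V| <= n)%N -> (size E <= d)%N -> admissible n d Gact.
Proof.
move=> hV hE; split => /=; last exact: Gact_no_isolated.
  rewrite leq_min; apply/andP; split.
    by apply: leq_trans hV; rewrite card_sig; exact: max_card.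
  by apply: leq_trans card_Act _; rewrite leq_add2l leq_mul2l hE orbT.
by rewrite !size_map.
Qed.

End ActivePart.

Lemma homV_span (R : comNzRingType) (n d : nat) (V : finType) (E : seq (V * V)) (a b : V) :
  (#|V| <= n)%N -> (size E <= d)%N -> inspan d (@homV R n V E a b).
Proof.
move=> hV hE.
have := spanZ (#|{: {ffun Idle E a b -> 'I_n}}|)%:R (span_graph R (admissible_Gact a b hV hE)).
by apply: span_ext => X _; rewrite homV_active homV_Gact.
Qed.

(* Partitions of a finite type V, encoded canonically: the kernel of a map f
   is represented by the endomap sending v to the first element of [enum V]
   with the same f-value, and a "canonical" endomap k is one that is its own
   kernel map. *)
Section Kernels.
Variable V : finType.

Definition rep (T : eqType) (f : V -> T) (v : V) : V :=
  nth v (enum V) (find (fun u => f u == f v) (enum V)).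

Lemma rep_has (T : eqType) (f : V -> T) v : has (fun u => f u == f v) (enum V).
Proof. by apply/hasP; exists v; rewrite ?mem_enum. Qed.

Lemma rep_f (T : eqType) (f : V -> T) v : f (rep f v) = f v.
Proof. exact/eqP/(nth_find v (rep_has f v)). Qed.

Lemma rep_eqE (T : eqType) (f : V -> T) u v : (rep f u == rep f v) = (f u == f v).
Proof.
apply/eqP/eqP => [e|e]; first by rewrite -(rep_f f u) -(rep_f f v) e.
by rewrite /rep e; apply: set_nth_default; rewrite -has_find rep_has.
Qed.

Lemma rep_ext (T T' : eqType) (f : V -> T) (f' : V -> T') v :
  (forall u, (f u == f v) = (f' u == f' v)) -> rep f v = rep f' v.
Proof. by move=> h; rewrite /rep (eq_find h). Qed.

Definition canon (k : {ffun V -> V}) : bool := [forall v, k v == rep k v].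
Definition kernel_of (T : eqType) (f : V -> T) : {ffun V -> V} := [ffun v => rep f v].

Lemma canon_kernel_of (T : eqType) (f : V -> T) : canon (kernel_of f).
Proof.
apply/forallP => v; rewrite ffunE; apply/eqP; apply: rep_ext => u.
by rewrite !ffunE rep_eqE.
Qed.

Lemma canonP k : canon k -> forall v, k v = rep k v.
Proof. by move/forallP => h v; apply/eqP. Qed.

Lemma canon_idem k : canon k -> forall v, k (k v) = k v.
Proof. by move=> ck v; rewrite {1}(canonP ck v) rep_f. Qed.

Definition Quot (k : {ffun V -> V}) := {x : V | x \in codom k}.
Definition quot (k : {ffun V -> V}) (v : V) : Quot k := exist _ (k v) (codom_f k v).

Lemma quot_val k (w : Quot k) : canon k -> quot k (val w) = w.
Proof.
move=> ck; apply: val_inj => /=; case: w => x /= /codomP [v ->].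
exact: canon_idem.
Qed.

Definition id_kernel : {ffun V -> V} := [ffun v => v].

Lemma canon_id_kernel : canon id_kernel.
Proof.
apply/forallP => v; rewrite /rep ffunE (eq_find (a2 := pred1 v)); last first.
  by move=> u; rewrite !ffunE.
by rewrite -/(index v (enum V)) nth_index ?mem_enum.
Qed.

Lemma card_Quot k : canon k -> k != id_kernel -> (#|{: Quot k}| < #|V|)%N.
Proof.
move=> ck nk.
have [v kv] : exists v, k v != v.
  apply/existsP; apply: contraR nk; rewrite negb_exists => /forallP h.
  by apply/eqP/ffunP => v; rewrite ffunE; apply/eqP; have := h v; rewrite negbK.
have vn : v \notin codom k by apply: contra kv => /codomP [u ->]; rewrite canon_idem.
rewrite card_sig -(cardC [pred x | x \in codom k]) -[X in (X < _)%N]addn0 ltn_add2l.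
by apply/card_gt0P; exists v; rewrite !inE.
Qed.

End Kernels.

(* Grouping the maps phi : V -> [n] by their kernel: homV is the sum, over all
   partitions k of V, of the injective sums of the quotient graphs V/k. *)
Lemma homV_kernel_decomp (R : comNzRingType) (n : nat) (V : finType)
    (E : seq (V * V)) (a b : V) (X : 'M[R]_n) :
  homV E a b X =
  \sum_(k : {ffun V -> V} | canon k) injV (emap (quot k) E) (quot k a) (quot k b) X.
Proof.
apply/matrixP => i j; rewrite summxE mxE.
rewrite (partition_big (fun phi : {ffun V -> 'I_n} => kernel_of phi) (@canon V)) /=;
  last by move=> phi _; exact: canon_kernel_of.
apply: eq_bigr => k ck; rewrite mxE.
pose lift (psi : {ffun Quot k -> 'I_n}) : {ffun V -> 'I_n} := [ffun v => psi (quot k v)].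
rewrite (reindex lift); last first.
  exists (fun phi : {ffun V -> 'I_n} => [ffun w => phi (val w)] : {ffun Quot k -> 'I_n}).
    by move=> psi _; apply/ffunP => w; rewrite !ffunE quot_val.
  move=> phi; rewrite inE => /andP [_ /eqP hk]; apply/ffunP => v.
  by rewrite !ffunE /= -hk ffunE rep_f.
apply: eq_big => [psi|psi _]; last first.
  by rewrite big_map; apply: eq_bigr => e _; rewrite !ffunE.
rewrite !ffunE andbC; congr (_ && _).
apply/eqP/injectiveP => [hk|psi_inj].
- move=> w1 w2 e12; rewrite -(quot_val w1 ck) -(quot_val w2 ck); congr (quot k _).
  have e1 : val w1 = k (val w1) by have := congr1 val (quot_val w1 ck).
  have e2 : val w2 = k (val w2) by have := congr1 val (quot_val w2 ck).
  have hx : lift psi (val w1) = lift psi (val w2) by rewrite !ffunE !quot_val.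
  move: hx e1 e2; move: (val w1) (val w2) => x1 x2 hx e1 e2.
  by rewrite e1 e2 -hk !ffunE; apply/eqP; rewrite rep_eqE hx.
- apply/ffunP => v; rewrite !ffunE (canonP ck v); apply: rep_ext => u.
  rewrite !ffunE (inj_eq psi_inj); apply/eqP/eqP => [e|e]; last exact: val_inj.
  exact: (congr1 val e).
Qed.

(* Injective sums are spanned, by induction on |V|: the discrete partition
   term of homV is injV itself, every other term has fewer nodes, and
   injective sums with more than n nodes vanish. *)
Lemma injV_span (R : comNzRingType) (n d m : nat) (V : finType) (E : seq (V * V)) (a b : V) :
  (#|V| <= m)%N -> (size E <= d)%N -> inspan d (@injV R n V E a b).
Proof.
elim: m V E a b => [|m ih] V E a b hV hE.
  have : (0 < #|V|)%N by apply/card_gt0P; exists a.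
  by rewrite ltnNge hV.
have [hVn|hVn] := leqP #|V| n; last first.
  apply: span_ext (span0 R n d) => X _; apply/matrixP => i k; rewrite !mxE.
  rewrite big_pred0 // => phi; apply/negbTE/negP => /and3P [/injectiveP phi_inj _ _].
  by have := leq_card phi phi_inj; rewrite card_ord leqNgt hVn.
pose F (X : 'M[R]_n) : 'M[R]_n := homV E a b X -
  \sum_(k : {ffun V -> V} | canon k && (k != id_kernel V))
     injV (emap (quot k) E) (quot k a) (quot k b) X.
apply: (span_ext (F := F)).
  move=> X _; rewrite /F homV_kernel_decomp (bigD1 (id_kernel V)) ?canon_id_kernel //= addrK.
  have c1 : cancel (quot (id_kernel V)) val by move=> v; rewrite /= ffunE.
  have c2 : cancel val (quot (id_kernel V)) by move=> w; rewrite quot_val ?canon_id_kernel.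
  by rewrite -(injV_relabel c1 c2).
apply: spanB; first exact: homV_span.
apply: span_sum => k /andP [ck nk]; apply: ih; last by rewrite size_map.
by rewrite -ltnS; apply: leq_trans hV; exact: card_Quot.
Qed.

(* An equivariant f equals its Reynolds average
   f X = 1/n! sum_g g^-1 . f(g . X).  Expanding each entry of f into
   monomials, the average of the monomial x^m placed at entry (i, k) is the
   injective sum of the multigraph on the nodes [n] with m_{rs} copies of the
   edge (r, s) and output pair (i, k).  This is where the injective sums come
   from, and they are spanned by the previous lemma. *)
Section Reynolds.
Variables (R : numFieldType) (n : nat).

Lemma pactZ (g : 'S_n) (c : R) (A : 'M[R]_n) : pact g (c *: A) = c *: pact g A.
Proof. by apply/matrixP => i j; rewrite !mxE. Qed.

Lemma pact_sum (g : 'S_n) (I : Type) (r : seq I) (P : pred I) (F : I -> 'M[R]_n) :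
  pact g (\sum_(i <- r | P i) F i) = \sum_(i <- r | P i) pact g (F i).
Proof. by apply/matrixP => i j; rewrite !mxE !summxE; apply: eq_bigr => x _; rewrite mxE. Qed.

Lemma pactK (g : 'S_n) (A : 'M[R]_n) : pact g^-1 (pact g A) = A.
Proof. by apply/matrixP => i j; rewrite !mxE invgK !permK. Qed.

Lemma pact_sym (g : 'S_n) (A : 'M[R]_n) : symmat A -> symmat (pact g A).
Proof. by move=> sA; apply/matrixP => i j; rewrite !mxE -{1}sA mxE. Qed.

Lemma reynolds (f : 'M[R]_n -> 'M[R]_n) (X : 'M[R]_n) : equivariant f -> symmat X ->
  f X = (n`!%:R)^-1 *: \sum_(g : 'S_n) pact g^-1 (f (pact g X)).
Proof.
move=> ef sX; rewrite (eq_bigr (fun _ => f X)) => [|g _]; last by rewrite ef // pactK.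
rewrite sumr_const card_Sn -scaler_nat scalerA mulVf ?scale1r //.
by rewrite pnatr_eq0 -lt0n fact_gt0.
Qed.

Lemma big_mxvec (T : Type) (idx : T) (op : Monoid.com_law idx) (F : 'I_(n * n) -> T) :
  \big[op/idx]_(t < n * n) F t = \big[op/idx]_(rs : 'I_n * 'I_n) F (mxvec_index rs.1 rs.2).
Proof.
rewrite (reindex (uncurry (@mxvec_index n n))) /=; last first.
  by have [g hg1 hg2] := curry_mxvec_bij n n; exists g => x _; [apply: hg1 | apply: hg2].
by apply: eq_bigr => -[r s].
Qed.

Definition mon_edges (m : 'X_{1.. n * n}) : seq ('I_n * 'I_n) :=
  flatten [seq nseq (m (mxvec_index rs.1 rs.2)) rs | rs <- enum {: 'I_n * 'I_n}].

Lemma mon_edges_prod (m : 'X_{1.. n * n}) (Y : 'M[R]_n) :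
  \prod_(t < n * n) (mxvec Y 0 t) ^+ (m t) = \prod_(e <- mon_edges m) Y e.1 e.2.
Proof.
rewrite big_mxvec /mon_edges big_flatten /= big_map big_enum /=.
by apply: eq_bigr => rs _; rewrite big_nseq iter_mulr_1 mxvecE.
Qed.

Lemma size_mon_edges (m : 'X_{1.. n * n}) : size (mon_edges m) = mdeg m.
Proof.
rewrite /mon_edges size_flatten /shape -map_comp mdegE.
rewrite (big_mxvec (Monoid.ComLaw.clone _ _ addn _) (fun t => m t)).
by rewrite sumnE big_map big_enum /=; apply: eq_bigr => rs _; rewrite /= size_nseq.
Qed.

(* Averaging x^m E_{ik}: the sum over g becomes a sum over the injective maps
   phi = g^-1 from [n] to [n] sending (i, k) to the output pair. *)
Lemma reynolds_monomial (m : 'X_{1.. n * n}) (i k : 'I_n) (X : 'M[R]_n) :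
  \sum_(g : 'S_n) (\prod_(t < n * n) (mxvec (pact g X) 0 t) ^+ m t) *: pact g^-1 (delta_mx i k)
  = injV (mon_edges m) i k X.
Proof.
apply/matrixP => p q; rewrite summxE mxE.
rewrite (eq_bigr (fun g : 'S_n => if (g p == i) && (g q == k) then
     \prod_(e <- mon_edges m) X ((g^-1)%g e.1) ((g^-1)%g e.2) else 0)); last first.
  move=> g _; rewrite !mxE invgK mon_edges_prod.
  rewrite (eq_bigr (fun e => X ((g^-1)%g e.1) ((g^-1)%g e.2))); last by move=> e _; rewrite mxE.
  by case: ifP; rewrite ?mulr1 ?mulr0.
rewrite -big_mkcond /=.
pose h (g : 'S_n) : {ffun 'I_n -> 'I_n} := [ffun v => (g^-1)%g v].
pose h' (phi : {ffun 'I_n -> 'I_n}) : 'S_n := ((insubd (1%g : 'S_n) phi : 'S_n)^-1)%g.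
have pvalE (s : 'S_n) v : val s v = s v by rewrite -pvalE.
rewrite [RHS](reindex h); last first.
  exists h'; move=> g; rewrite inE => /and3P [g_inj _ _]; rewrite /h'.
    have -> : insubd (1%g : 'S_n) (h g) = (g^-1)%g.
      by apply: val_inj; rewrite insubdK //; apply/ffunP => v; rewrite ffunE pvalE.
    by rewrite invgK.
  by apply/ffunP => v; rewrite ffunE invgK -pvalE insubdK.
apply: eq_big => [g|g _]; last by apply: eq_bigr => e _; rewrite !ffunE.
have -> : injectiveb (h g) by apply/injectiveP => x y; rewrite !ffunE; exact: perm_inj.
have perm_eqE x y : (g x == y) = ((g^-1)%g y == x).
  by rewrite -[RHS](inj_eq (@perm_inj _ g)) permKV eq_sym.
by rewrite !ffunE /= !perm_eqE.
Qed.

Lemma reynolds_expand (f : 'M[R]_n -> 'M[R]_n) (P : 'I_n * 'I_n -> mpoly.mpoly (n * n) R) :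
  equivariant f ->
  (forall ij (Y : 'M[R]_n), symmat Y ->
     f Y ij.1 ij.2 = mpoly.meval (fun t : 'I_(n * n) => mxvec Y 0 t) (P ij)) ->
  forall X, symmat X ->
  f X = (n`!%:R)^-1 *: \sum_(i < n) \sum_(j < n)
          \sum_(m <- msupp (P (i, j))) (P (i, j))@_m *: injV (mon_edges m) i j X.
Proof.
move=> ef hP X sX; rewrite (reynolds ef sX); congr (_ *: _).
under [RHS]eq_bigr => i _ do under eq_bigr => j _ do under eq_bigr => m _ do
  rewrite -reynolds_monomial scaler_sumr.
under [RHS]eq_bigr => i _ do under eq_bigr => j _ do rewrite exchange_big.
under [RHS]eq_bigr => i _ do rewrite exchange_big.
rewrite exchange_big /=; apply: eq_bigr => g _.
rewrite {1}(matrix_sum_delta (f (pact g X))) pact_sum; apply: eq_bigr => i _.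
rewrite pact_sum; apply: eq_bigr => j _.
rewrite pactZ (hP (i, j) _ (pact_sym g sX)) mevalE scaler_suml.
by apply: eq_bigr => m _; rewrite scalerA.
Qed.

End Reynolds.

Lemma equivariant_span (R : numFieldType) (n d : nat) (f : 'M[R]_n -> 'M[R]_n) :
  equivariant f -> polymap_le d f -> inspan d f.
Proof.
move=> ef pf.
pose entry_poly (ij : 'I_n * 'I_n) (p : mpoly.mpoly (n * n) R) :=
  (msize p <= d.+1)%N /\ forall Y : 'M[R]_n, symmat Y ->
    f Y ij.1 ij.2 = mpoly.meval (fun t : 'I_(n * n) => mxvec Y 0 t) p.
have [P hP] : exists P, forall ij, entry_poly ij (P ij).
  by apply: (@fin_all_exists _ (fun _ => mpoly.mpoly (n * n) R)) => ij; exact: pf.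
have expand := reynolds_expand ef (fun ij => proj2 (hP ij)).
apply: span_ext (fun X sX => esym (expand X sX)) _.
apply: spanZ; apply: span_sum => i _; apply: span_sum => j _.
set ms := msupp (P (i, j)).
apply: (span_ext (F := fun X => \sum_(m <- ms | m \in ms) (P (i, j))@_m *: injV (mon_edges m) i j X)).
  by move=> X _; rewrite -big_seq.
apply: span_sum => m hm.
apply: spanZ; apply: (@injV_span R n d #|'I_n|) => //.
rewrite size_mon_edges -ltnS; apply: leq_trans (proj1 (hP (i, j))).
exact: msize_mdeg_lt.
Qed.

Theorem mainTheorem3 (R : realType) (n d : nat) : (0 < n)%N ->
  (* each P_H (H admissible) is an equivariant polynomial map of degree <= d *)
  (forall H : graph, admissible n d H ->
     @equivariant R n (Pmap H) /\ @polymap_le R n d (Pmap H)) /\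
  (* P_H does not depend on the orientation of the edges *)
  (forall (m : nat) (E1 E2 : seq ('I_m * 'I_m)) (a b : 'I_m),
     (forall r s : 'I_m, count (und_eq r s) E1 = count (und_eq r s) E2) ->
     forall X : 'M[R]_n, symmat X ->
       Pmap (Graph E1 a b) X = Pmap (Graph E2 a b) X) /\
  (* spanning *)
  (forall f : 'M[R]_n -> 'M[R]_n, equivariant f -> polymap_le d f ->
     exists (k : nat) (G : 'I_k -> graph) (c : 'I_k -> R),
       (forall i, admissible n d (G i)) /\
       forall X : 'M[R]_n, symmat X ->
         f X = \sum_(i < k) c i *: Pmap (G i) X) /\
  (* linear independence of the P_H over pairwise non-isomorphic H *)
  (forall (k : nat) (G : 'I_k -> graph) (c : 'I_k -> R),
     (forall i, admissible n d (G i)) ->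
     (forall i j, i != j -> ~ giso (G i) (G j)) ->
     (forall X : 'M[R]_n, symmat X -> \sum_(i < k) c i *: Pmap (G i) X = 0) ->
     forall i, c i = 0).
Proof.
move=> _; split; [|split; [|split]].
- by move=> H [_ hE _]; split; [exact: Pmap_equiv | exact: Pmap_poly].
- exact: Pmap_orient.
- exact: equivariant_span.
- exact: Pmap_indep.
Qed.
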